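(* Let $mG^{(0)}$ be a finite canonical misinformation game and $\mathcal{T}$ the terminal set of the Adaptation Procedure on $mG^{(0)}$. Then: (i) $\mathcal{T}\subseteq\mathcal{AD}^\infty(\{mG^{(0)}\})$; (ii) for any $\sigma\in SME(mG^{(0)})$ there exists $mG\in\mathcal{T}$ such that $\sigma\in NME(mG)$.
   Context: A normal-form game is $G=\langle N,S,P\rangle$ with finite players $N$, finite pure strategy sets $S_i$, positions $S=\times_i S_i$, payoffs $P_i:S\to\mathbb{R}$. A misinformation game $mG=\langle G^0,G^1,\dots,G^{|N|}\rangle$ consists of the actual game $G^0$ and subjective games $G^i$; it is canonical if all $G^i=\langle N,S,P^i\rangle$ differ from $G^0$ only in payoffs and in every $G^i$ all players have equally many pure strategies. $NME(mG)$ is the set of profiles $\sigma=(\sigma_1,\dots,\sigma_{|N|})$ such that each $\sigma_i$ is player $i$'s component of some Nash equilibrium of $G^i$. $\chi(\sigma)=\mathrm{supp}(\sigma_1)\times\dots\times\mathrm{supp}(\sigma_{|N|})$. For $\vec v\in S$, $mG_{\vec v}$ is obtained by replacing, in every $P^i$ ($i\ge1$), the payoff vector at position $\vec v$ by $P^0(\vec v)$. For a set $M$ of misinformation games, $\mathcal{AD}(M)=\{mG_{\vec u}: mG\in M,\sigma\in NME(mG),\vec u\in\chi(\sigma)\}$, $\mathcal{AD}^{(0)}(M)=M$, $\mathcal{AD}^{(t+1)}(M)=\mathcal{AD}^{(t)}(\mathcal{AD}(M))$, $\mathcal{AD}^*(M)=\bigcup_{t\ge0}\mathcal{AD}^{(t)}(M)$;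 the length $\mathfrak{L}$ is the least $t\ge0$ with $\mathcal{AD}^{(t+1)}(M)=\mathcal{AD}^{(t)}(M)$ and $\mathcal{AD}^\infty(M)=\mathcal{AD}^{(\mathfrak{L})}(M)$. The terminal set is $\mathcal{T}=\{mG\in\mathcal{AD}^*(\{mG^{(0)}\}): mG\in\mathcal{AD}(\{mG\})\}$. A profile $\sigma$ is a stable misinformed equilibrium of $mG^{(0)}$ if there is $\widehat{mG}\in\mathcal{AD}^\infty(\{mG^{(0)}\})$ with $\sigma\in NME(\widehat{mG})$ and $\widehat{mG}_{\vec v}=\widehat{mG}$ for all $\vec v\in\chi(\sigma)$; $SME(mG^{(0)})$ is the set of these. *)

From HB Require Import structures.
From mathcomp Require Import all_boot all_order all_algebra.
Set Implicit Arguments. Unset Strict Implicit. Unset Printing Implicit Defensive.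
Import Order.TTheory GRing.Theory Num.Theory.
Local Open Scope ring_scope.

Section MG.
Variables (R : realFieldType) (n : nat) (m : 'I_n -> nat).

Definition pos := {dffun forall i : 'I_n, 'I_(m i)}.

Definition payoff := {ffun pos -> {ffun 'I_n -> R}}.

(* a canonical misinformation game: actual payoffs P^0 and subjective P^i,
   all over the same players and strategy sets *)
Record mgame := MGame { actual : payoff ; subj : {ffun 'I_n -> payoff} }.

Definition mixed (i : 'I_n) (x : {ffun 'I_(m i) -> R}) : Prop :=
  (forall k, 0 <= x k) /\ \sum_k x k = 1.

Definition profile := forall i : 'I_n, {ffun 'I_(m i) -> R}.

Definition is_profile (sg : profile) : Prop := forall i, mixed (sg i).

Definition exp_payoff (P : payoff) (sg : profile) (j : 'I_n) : R :=
  \sum_(s : pos) (\prod_(i : 'I_n) sg i (s i)) * P s j.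

Definition dev_payoff (P : payoff) (sg : profile) (j : 'I_n)
    (tau : {ffun 'I_(m j) -> R}) : R :=
  \sum_(s : pos) (tau (s j) * \prod_(i : 'I_n | i != j) sg i (s i)) * P s j.

Definition nash (P : payoff) (sg : profile) : Prop :=
  is_profile sg /\
  forall j (tau : {ffun 'I_(m j) -> R}), mixed tau ->
    @dev_payoff P sg j tau <= exp_payoff P sg j.

Definition NME (g : mgame) (sg : profile) : Prop :=
  forall i : 'I_n, exists tau : profile, nash (subj g i) tau /\ tau i = sg i.

Definition chi (sg : profile) (s : pos) : Prop := forall i, sg i (s i) != 0.

Definition adapt (g : mgame) (v : pos) : mgame :=
  MGame (actual g)
    [ffun i => [ffun s => if s == v then actual g v else subj g i s]].

Definition gset := mgame -> Prop.
Definition gset_eq (A B : gset) : Prop := forall g, A g <-> B g.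
Definition single (g0 : mgame) : gset := fun g => g = g0.

Definition AD (M : gset) : gset := fun g =>
  exists g1 sg u, M g1 /\ NME g1 sg /\ chi sg u /\ g = adapt g1 u.

Fixpoint ADiter (t : nat) (M : gset) : gset :=
  match t with
  | 0%N => M
  | t'.+1 => ADiter t' (AD M)
  end.

Definition ADstar (M : gset) : gset := fun g => exists t, ADiter t M g.

Definition is_length (M : gset) (L : nat) : Prop :=
  gset_eq (ADiter L.+1 M) (ADiter L M) /\
  forall t, (t < L)%N -> ~ gset_eq (ADiter t.+1 M) (ADiter t M).

Definition ADinf (M : gset) : gset := fun g =>
  exists L, is_length M L /\ ADiter L M g.

Definition terminal (g0 : mgame) : gset := fun g =>
  ADstar (single g0) g /\ AD (single g) g.

Definition SME (g0 : mgame) (sg : profile) : Prop :=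
  exists gh, ADinf (single g0) gh /\ NME gh sg /\
    forall v, chi sg v -> adapt gh v = gh.

End MG.

From mathcomp Require Import all_boot all_order all_algebra.
From Stdlib Require Import Classical Wf_nat.

(* Call a position adapted when every subjective payoff vector at it equals the actual one.
   An adaptation step either fixes the game or adapts one more position, so every chain of
   more than |S| steps contains a self-loop, which can be repeated or dropped. Hence AD^(k+1) = AD^(k) as soon as k > |S|,
   the length exists, and AD^(t) is constant from the length on. A terminal game reaches
   every level beyond its own by looping, in particular the stable one; conversely the game
   witnessing a stable equilibrium is fixed by adaptation at any position of the (nonempty)
   support of that equilibrium, so it loops. *)

Set Implicit Arguments. Unset Strict Implicit. Unset Printing Implicit Defensive.
Local Open Scope ring_scope.

Lemma exists_least_nat (P : nat -> Prop) N :
  P N -> exists L, P L /\ forall t, (t < L)%N -> ~ P t.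
Proof.
move=> PN.
have [L [[PL L_least] _]] := dec_inh_nat_subset_has_unique_least_element P
  (fun t => classic (P t)) (ex_intro _ N PN).
by exists L; split=> // t ltL /L_least/leP; rewrite leqNgt ltL.
Qed.

Section Walks.

Variables (T : Type) (e : T -> T -> Prop).

Fixpoint walk (k : nat) (x y : T) : Prop :=
  match k with
  | 0%N => x = y
  | k'.+1 => exists z, e x z /\ walk k' z y
  end.

Variables (f : T -> nat) (B : nat).
Hypothesis e_grow : forall x y, e x y -> y = x \/ (f x < f y)%N.
Hypothesis f_bounded : forall x, (f x <= B)%N.

Lemma walk_shrink k x y : walk k.+1 x y -> (f x + k.+1 <= f y)%N \/ walk k x y.
Proof.
elim: k x => [|k IH] x [z [xz zy]].
  by case: (e_grow xz) => [zx|lt]; [right; rewrite -zx | left; rewrite addn1 -zy].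
case: (e_grow xz) => [zx|lt]; first by right; rewrite -zx.
case: (IH z zy) => [le|walk_zy]; last by right; exists z.
by left; apply: leq_trans le; rewrite addnS ltn_add2r.
Qed.

Lemma walk_grow k x y : walk k x y -> (f x + k <= f y)%N \/ walk k.+1 x y.
Proof.
elim: k x => [|k IH] x /=; first by move=> ->; left; rewrite addn0.
move=> [z [xz zy]]; case: (e_grow xz) => [zx|lt].
  by right; exists x; split; [rewrite -{2}zx | exists z].
case: (IH z zy) => [le|walk_zy]; last by right; exists z.
by left; apply: leq_trans le; rewrite addnS ltn_add2r.
Qed.

Lemma walk_stable k x y : (B < k)%N -> walk k.+1 x y <-> walk k x y.
Proof.
move=> ltBk; have long (d : nat) : (k <= d)%N -> ~ (f x + d <= f y)%N.
  move=> le_kd le_fy; have := leq_trans le_kd (leq_addl (f x) d).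
  by move/leq_trans/(_ (leq_trans le_fy (f_bounded y))); rewrite leqNgt ltBk.
split=> [/walk_shrink|/walk_grow] [le|//]; exfalso; exact: long le.
Qed.

End Walks.

Section Adaptation.

Variables (R : realFieldType) (n : nat) (m : 'I_n -> nat).
Implicit Types (g h : mgame R m) (M : gset R m) (sg : profile R m).

Definition adapt_step g h : Prop :=
  exists sg u, NME g sg /\ chi sg u /\ h = adapt g u.

Lemma AD_adapt_step M h : AD M h <-> exists g, M g /\ adapt_step g h.
Proof.
split=> [[g [sg [u [Mg step]]]]|[g [Mg [sg [u step]]]]].
  by exists g; split=> //; exists sg, u.
by exists g, sg, u.
Qed.

Lemma ADiter_walk t M h : ADiter t M h <-> exists g, M g /\ walk adapt_step t g h.
Proof.
elim: t M => [|t IH] M /=; first by split=> [Mh|[g [Mg <-]]] //; exists h.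
rewrite IH; split=> [[z [/AD_adapt_step [g [Mg gz]] zh]]|[g [Mg [z [gz zh]]]]].
  by exists g; split=> //; exists z.
by exists z; split=> //; apply/AD_adapt_step; exists g.
Qed.

Lemma ADiterSr t M : ADiter t.+1 M = AD (ADiter t M).
Proof. by elim: t M => // t IH M; apply: IH. Qed.

Lemma AD_ext M1 M2 : gset_eq M1 M2 -> gset_eq (AD M1) (AD M2).
Proof. by move=> eqM h; rewrite !AD_adapt_step; split=> -[g [/eqM Mg step]]; exists g. Qed.

Definition adapted g : {set pos m} :=
  [set v | [forall i, subj g i v == actual g v]].

Lemma adapted_adapt g u : adapted (adapt g u) = u |: adapted g.
Proof.
apply/setP=> v; rewrite !inE; case: (v =P u) => [->|/eqP v_neq_u] /=.
  by apply/forallP=> i; rewrite !ffunE eqxx.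
by apply: eq_forallb=> i; rewrite !ffunE (negbTE v_neq_u).
Qed.

Lemma adapt_id g u : u \in adapted g -> adapt g u = g.
Proof.
case: g => a s; rewrite inE => /forallP /= s_u; congr MGame.
apply/ffunP=> i; apply/ffunP=> v; rewrite !ffunE.
by case: (v =P u) => [->|//]; apply/esym/eqP.
Qed.

Lemma adapt_step_grow g h :
  adapt_step g h -> h = g \/ (#|adapted g| < #|adapted h|)%N.
Proof.
move=> [sg [u [_ [_ ->]]]]; case: (boolP (u \in adapted g)) => [/adapt_id|u_new].
  by left.
by right; rewrite adapted_adapt cardsU1 u_new.
Qed.

Lemma ADiter_stable M k : (#|pos m| < k)%N -> gset_eq (ADiter k.+1 M) (ADiter k M).
Proof.
move=> ltSk h; rewrite !ADiter_walk.
have stable g :=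
  walk_stable adapt_step_grow (fun g' => max_card (mem (adapted g'))) g h ltSk.
by split=> -[g [Mg /stable walk_gh]]; exists g.
Qed.

Lemma length_exists M : exists L, is_length M L.
Proof.
have [L least_L] := exists_least_nat
  (P := fun t => gset_eq (ADiter t.+1 M) (ADiter t M)) (ADiter_stable M (ltnSn #|pos m|)).
by exists L.
Qed.

Lemma ADiter_stable_from M L j :
  gset_eq (ADiter L.+1 M) (ADiter L M) -> gset_eq (ADiter (L + j) M) (ADiter L M).
Proof.
move=> eqL; elim: j => [|j IH] h; first by rewrite addn0.
by rewrite addnS ADiterSr -(eqL h) ADiterSr; apply: AD_ext.
Qed.

Lemma ADiter_loop M t j g : ADiter t M g -> AD (single g) g -> ADiter (t + j) M g.
Proof.
move=> Mg /AD_adapt_step [_ [-> loop]].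
elim: j => [|j IH]; first by rewrite addn0.
by rewrite addnS ADiterSr; apply/AD_adapt_step; exists g.
Qed.

Lemma mixed_support i (x : {ffun 'I_(m i) -> R}) : mixed x -> exists k, x k != 0.
Proof.
move=> [_ sum1]; apply/existsP; apply: contraT; rewrite negb_exists => /forallP x0.
have : \sum_k x k = 0 by apply: big1 => k _; apply/eqP; move: (x0 k); rewrite negbK.
by rewrite sum1 => /eqP; rewrite GRing.oner_eq0.
Qed.

Lemma NME_profile g sg : NME g sg -> is_profile sg.
Proof. by move=> NMEg i; have [tau [[tau_prof _] <-]] := NMEg i. Qed.

Lemma profile_support sg : is_profile sg -> exists u : pos m, chi sg u.
Proof.
move=> prof; exists [ffun i => xchoose (mixed_support (prof i))] => i.
by rewrite ffunE; exact: (xchooseP (mixed_support (prof i))).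
Qed.

Lemma adapt_fixed_loop g sg :
  NME g sg -> (forall v, chi sg v -> adapt g v = g) -> AD (single g) g.
Proof.
move=> NMEg fixed; have [u chi_u] := profile_support (NME_profile NMEg).
by exists g, sg, u; rewrite fixed.
Qed.

End Adaptation.

Theorem proposition11 (R : realFieldType) (n : nat) (m : 'I_n -> nat)
    (g0 : mgame R m) :
  (forall g, terminal g0 g -> ADinf (single g0) g) /\
  (forall sg, SME g0 sg -> exists g, terminal g0 g /\ NME g sg).
Proof.
split=> [g [[t reach_g] loop_g]|sg [gh [[L [_ reach_gh]] [NMEgh fixed]]]].
  have [L len_L] := length_exists (single g0).
  exists L; split=> //; apply/(ADiter_stable_from t len_L.1).
  by rewrite addnC; apply: ADiter_loop.
by exists gh; split=> //; split; [exists L | exact: adapt_fixed_loop fixed].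
Qed.
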